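(* Fix constants $0<r<s<1$. For all sufficiently large $n$ there is an MWIS instance $x$ on at most $n$ vertices such that $\mathrm{cost}(A_\rho,x)=1$ for every $\rho\in(r,s)$ and $\mathrm{cost}(A_\rho,x)=o_n(1)$ for every $\rho\in[0,1]$ with $\rho<r$ or $\rho>s$. This holds for both the adaptive and non-adaptive versions of the heuristics.
   Context: MWIS instance: an undirected graph $G=(V,E)$ with nonnegative vertex weights $w_v$. For $\rho\in[0,1]$, the greedy heuristic $A_\rho$ repeatedly selects, among vertices not yet selected or blocked, one maximizing $w_v/(1+\deg(v))^\rho$ (ties broken lexicographically), adds it to the independent set, and blocks its neighbors. In the non-adaptive version $\deg(v)$ is the degree in the original graph; in the adaptive version it is the degree in the subgraph induced by remaining (unselected, unblocked) vertices. $\mathrm{cost}(A_\rho,x)$ is the total weight of the returned independent set. $o_n(1)$ denotes a quantity tending to $0$ as $n\to\infty$. *)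

From Stdlib Require Import Reals Lra Lia List Arith Bool.
Import ListNotations.
Open Scope R_scope.

Record mwis := MkMWIS {
  nv  : nat;
  adj : nat -> nat -> bool;
  wt  : nat -> R
}.

Definition wf_mwis (x : mwis) : Prop :=
  (forall u v, adj x u v = adj x v u) /\
  (forall v, adj x v v = false) /\
  (forall v, (v < nv x)%nat -> 0 <= wt x v).

Definition verts (x : mwis) : list nat := seq 0 (nv x).

Definition deg_in (x : mwis) (l : list nat) (v : nat) : nat :=
  length (filter (fun u => adj x v u) l).

(* first element of l (in list order) maximizing f: with l in increasing
   order this breaks ties lexicographically (smallest label wins). *)
Fixpoint best (f : nat -> R) (l : list nat) : option nat :=
  match l with
  | [] => None
  | v :: l' =>
      match best f l' with
      | None => Some v
      | Some u => if Rlt_dec (f v) (f u) then Some u else Some v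
      end
  end.

Definition score (adaptive : bool) (rho : R) (x : mwis) (rem : list nat)
  (v : nat) : R :=
  let d := if adaptive then deg_in x rem v else deg_in x (verts x) v in
  wt x v / Rpower (1 + INR d) rho.

Fixpoint greedy_aux (adaptive : bool) (rho : R) (x : mwis) (fuel : nat)
  (rem sel : list nat) : list nat :=
  match fuel with
  | O => sel
  | S k =>
      match best (score adaptive rho x rem) rem with
      | None => sel
      | Some v =>
          greedy_aux adaptive rho x k
            (filter (fun u => andb (negb (Nat.eqb u v)) (negb (adj x v u))) rem)
            (v :: sel)
      end
  end.

(* The independent set returned by A_rho (fuel nv suffices: each step
   removes the selected vertex). *)
Definition greedy (adaptive : bool) (rho : R) (x : mwis) : list nat :=
  greedy_aux adaptive rho x (nv x) (verts x) [].

Definition cost (adaptive : bool) (rho : R) (x : mwis) : R :=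
  fold_right (fun v acc => wt x v + acc) 0 (greedy adaptive rho x).

(* Take a hub adjacent to every other vertex, a vertex c adjacent to the hub
   and to m middle vertices of weight 1/m, and m padding vertices of weight 0
   adjacent to the hub and to every middle vertex.  Then 1 + deg is 2m+2 for
   the hub, m+2 for c and m+3 for the middle vertices, and the weights of the
   hub and of c are tuned so that the hub ties with a middle vertex exactly at
   rho = r and c ties with a middle vertex exactly at rho = s.  Hence the first
   pick is the hub for rho < r, a middle vertex for r < rho < s, and c for
   rho > s.  What remains afterwards is independent and is taken whole: nothing
   after the hub, the other middle vertices (total weight 1) after a middle
   vertex, and weightless padding after c.  The hub and c weigh O(1/m).
   The first pick uses degrees in the whole graph in both versions, so the
   adaptive and non-adaptive heuristics behave identically. *)

From Stdlib Require Import Reals Lra Lia List Bool.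
Import ListNotations.
Open Scope R_scope.

Definition weight (x : mwis) (l : list nat) : R :=
  fold_right (fun v acc => wt x v + acc) 0 l.

Definition independent (x : mwis) (l : list nat) : Prop :=
  forall u w, In u l -> In w l -> adj x u w = false.

Definition drop_closed_nbhd (x : mwis) (v : nat) (l : list nat) : list nat :=
  filter (fun u => negb (u =? v) && negb (adj x v u)) l.

Lemma best_None_nil (f : nat -> R) (l : list nat) : best f l = None -> l = [].
Proof.
  destruct l as [|a l]; simpl; [reflexivity|].
  destruct (best f l); [destruct (Rlt_dec _ _)|]; discriminate.
Qed.

Lemma best_spec (f : nat -> R) (l : list nat) (v : nat) :
  best f l = Some v -> In v l /\ forall u, In u l -> f u <= f v.
Proof.
  revert v; induction l as [|a l IH]; simpl; intros v Hbest; [discriminate|].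
  destruct (best f l) as [w|] eqn:Hl.
  - destruct (IH w eq_refl) as [Hw Hmax].
    destruct (Rlt_dec (f a) (f w)); injection Hbest as <-.
    + split; [now right|]. intros u [<-|Hu]; [lra|auto].
    + split; [now left|]. intros u [<-|Hu]; [lra|]. specialize (Hmax u Hu); lra.
  - apply best_None_nil in Hl; subst. injection Hbest as <-.
    split; [now left|]. intros u [<-|[]]; lra.
Qed.

Lemma length_filter_const (f : nat -> bool) (b : bool) (l : list nat) :
  (forall u, In u l -> f u = b) -> length (filter f l) = if b then length l else 0%nat.
Proof.
  induction l as [|a l IH]; intros Hf; [now destruct b|].
  simpl. rewrite (Hf a) by now left.
  destruct b; simpl; rewrite IH by (intros; apply Hf; now right); reflexivity.
Qed.

Lemma weight_const (x : mwis) (l : list nat) (c : R) :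
  (forall u, In u l -> wt x u = c) -> weight x l = INR (length l) * c.
Proof.
  induction l as [|a l IH]; intros Hc; [simpl; ring|].
  cbn [weight fold_right length]. fold (weight x l).
  rewrite Hc by now left.
  rewrite IH, S_INR by (intros; apply Hc; now right). ring.
Qed.

Lemma weight_remove (x : mwis) (l : list nat) (v : nat) : NoDup l -> In v l ->
  weight x l = wt x v + weight x (filter (fun u => negb (u =? v)) l).
Proof.
  induction l as [|a l IH]; [intros _ []|].
  intros Hnd Hv; inversion Hnd as [|? ? Ha Hnd']; subst.
  cbn [weight fold_right filter]. fold (weight x l).
  destruct Hv as [<-|Hv].
  - rewrite Nat.eqb_refl. simpl negb. cbn iota.
    rewrite (filter_ext_in _ (fun _ => true)), filter_true; [reflexivity|].
    intros u Hu. destruct (Nat.eqb_spec u a); subst; tauto.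
  - destruct (Nat.eqb_spec a v) as [->|]; [contradiction|]. simpl negb. cbn iota.
    cbn [fold_right]. fold (weight x (filter (fun u => negb (u =? v)) l)).
    rewrite IH by assumption. ring.
Qed.

Lemma length_drop_closed_nbhd (x : mwis) (v : nat) (l : list nat) :
  In v l -> (length (drop_closed_nbhd x v l) < length l)%nat.
Proof.
  intros Hv. unfold drop_closed_nbhd.
  rewrite <- (filter_length (fun u => negb (u =? v) && negb (adj x v u)) l).
  assert (Hin : In v (filter (fun u => negb (negb (u =? v) && negb (adj x v u))) l)).
  { apply filter_In. now rewrite Nat.eqb_refl. }
  destruct (filter _ l); [destruct Hin|simpl; lia].
Qed.

Lemma greedy_aux_independent (x : mwis) (ad : bool) (rho : R) (fuel : nat) :
  forall rem sel, NoDup rem -> independent x rem -> (length rem <= fuel)%nat ->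
  weight x (greedy_aux ad rho x fuel rem sel) = weight x rem + weight x sel.
Proof.
  induction fuel as [|k IH]; intros rem sel Hnd Hind Hlen.
  - destruct rem; simpl in *; [lra|lia].
  - cbn [greedy_aux]. destruct (best (score ad rho x rem) rem) as [v|] eqn:Hbest.
    + destruct (best_spec _ _ _ Hbest) as [Hv _].
      assert (Hdrop : drop_closed_nbhd x v rem = filter (fun u => negb (u =? v)) rem).
      { apply filter_ext_in. intros u Hu. rewrite (Hind v u) by assumption.
        apply andb_true_r. }
      pose proof (length_drop_closed_nbhd x v rem Hv) as Hshorter.
      fold (drop_closed_nbhd x v rem). rewrite IH, Hdrop.
      * rewrite (weight_remove x rem v) by assumption. simpl. lra.
      * apply NoDup_filter, Hnd.
      * intros u w Hu Hw. apply filter_In in Hu, Hw. apply Hind; tauto.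
      * lia.
    + apply best_None_nil in Hbest; subst. simpl. lra.
Qed.

Lemma score_initial (ad : bool) (rho : R) (x : mwis) (v : nat) :
  score ad rho x (verts x) v = wt x v / Rpower (1 + INR (deg_in x (verts x) v)) rho.
Proof. unfold score; destruct ad; reflexivity. Qed.

Lemma cost_first_pick (x : mwis) (ad : bool) (rho : R) (v : nat) :
  best (score ad rho x (verts x)) (verts x) = Some v ->
  independent x (drop_closed_nbhd x v (verts x)) ->
  cost ad rho x = wt x v + weight x (drop_closed_nbhd x v (verts x)).
Proof.
  intros Hbest Hind. destruct (best_spec _ _ _ Hbest) as [Hv _].
  pose proof (length_drop_closed_nbhd x v _ Hv) as Hshorter.
  unfold verts in Hshorter at 2. rewrite length_seq in Hshorter.
  unfold cost, greedy. destruct (nv x) as [|k]; [lia|].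
  cbn [greedy_aux]. rewrite Hbest. fold (drop_closed_nbhd x v (verts x)).
  change (fold_right _ 0 ?l) with (weight x l).
  rewrite greedy_aux_independent.
  - simpl. lra.
  - apply NoDup_filter, seq_NoDup.
  - exact Hind.
  - lia.
Qed.

Lemma Rpower_pos (q e : R) : 0 < Rpower q e.
Proof. apply exp_pos. Qed.

Lemma Rpower_gt_1 (q e : R) : 1 < q -> 0 < e -> 1 < Rpower q e.
Proof. intros Hq He. rewrite <- (Rpower_O q) by lra. now apply Rpower_lt. Qed.

Lemma Rpower_lt_1 (q e : R) : 1 < q -> e < 0 -> Rpower q e < 1.
Proof. intros Hq He. rewrite <- (Rpower_O q) by lra. now apply Rpower_lt. Qed.

Lemma Rpower_div_scaled_base (q a c e k rho : R) : 0 < q -> 0 < a -> 0 < c ->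
  Rpower q e / c / Rpower (a * Rpower q k) rho
  = / c / Rpower a rho * Rpower q (e - k * rho).
Proof.
  intros Hq Ha Hc.
  rewrite <- Rpower_mult_distr by (apply Rpower_pos || assumption).
  rewrite Rpower_mult. unfold Rminus. rewrite Rpower_plus, Rpower_Ropp.
  pose proof (Rpower_pos a rho). pose proof (Rpower_pos q (k * rho)).
  field. lra.
Qed.

Lemma Un_cv_0_le_div (u : nat -> R) (g : nat -> nat) (C : R) (N : nat) :
  (forall K, exists M, forall n, (M <= n)%nat -> (K <= g n)%nat) ->
  (forall n, (N <= n)%nat -> 0 <= u n <= C / INR (g n)) -> Un_cv u 0.
Proof.
  intros Hg Hu eps Heps.
  destruct (INR_unbounded (C / eps)) as [K HK].
  destruct (Hg (S K)) as [M HM].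
  exists (max N M). intros n Hn.
  destruct (Hu n ltac:(lia)) as [Hu0 Hu1].
  assert (HgK : INR K < INR (g n)) by (apply lt_INR, HM; lia).
  assert (HC : C < eps * INR K).
  { apply (Rmult_lt_compat_l eps) in HK; [|lra].
    replace (eps * (C / eps)) with C in HK by (field; lra). lra. }
  pose proof (pos_INR K).
  unfold Rdist. rewrite Rminus_0_r, Rabs_pos_eq by exact Hu0.
  apply (Rle_lt_trans _ _ _ Hu1).
  apply (Rmult_lt_reg_r (INR (g n))); [lra|].
  unfold Rdiv. rewrite Rmult_assoc, Rinv_l, Rmult_1_r by lra. nra.
Qed.

Inductive vkind := Hub | Low | Mid | Pad.

Definition kind_adj (k k' : vkind) : bool :=
  match k, k' with
  | Hub, Hub => false
  | Hub, _ | _, Hub => true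
  | Low, Mid | Mid, Low | Mid, Pad | Pad, Mid => true
  | _, _ => false
  end.

(* Vertex 0 is the hub, 1 is c and 2 .. m+1 are middle; every larger label is
   padding, though only m+2 .. 2m+1 are vertices of the gadget. *)
Definition kind (m v : nat) : vkind :=
  if v =? 0 then Hub else if v =? 1 then Low else if v <? m + 2 then Mid else Pad.

(* The ratios of 1 + deg between the hub and a middle vertex, and between a
   middle vertex and c. *)
Definition hub_ratio (m : nat) : R := (2 * INR m + 2) / (INR m + 3).
Definition low_ratio (m : nat) : R := (INR m + 3) / (INR m + 2).

Definition kind_wt (r s : R) (m : nat) (k : vkind) : R :=
  match k with
  | Hub => Rpower (hub_ratio m) r / INR m
  | Low => Rpower (low_ratio m) (- s) / INR m
  | Mid => / INR m
  | Pad => 0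
  end.

Definition gadget (r s : R) (m : nat) : mwis :=
  MkMWIS (2 * m + 2) (fun u v => kind_adj (kind m u) (kind m v))
    (fun v => kind_wt r s m (kind m v)).

Definition kind_deg (m : nat) (k : vkind) : nat :=
  (if kind_adj k Hub then 1 else 0) + (if kind_adj k Low then 1 else 0)
  + (if kind_adj k Mid then m else 0) + (if kind_adj k Pad then m else 0).

Definition mid_score (m : nat) (rho : R) : R := / INR m / Rpower (INR m + 3) rho.

Definition kind_score (r s : R) (m : nat) (rho : R) (k : vkind) : R :=
  match k with
  | Hub => mid_score m rho * Rpower (hub_ratio m) (r - rho)
  | Low => mid_score m rho * Rpower (low_ratio m) (rho - s)
  | Mid => mid_score m rho
  | Pad => 0
  end.

Lemma kind_adj_sym (k k' : vkind) : kind_adj k k' = kind_adj k' k.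
Proof. now destruct k, k'. Qed.

Lemma kind_adj_refl (k : vkind) : kind_adj k k = false.
Proof. now destruct k. Qed.

Section Gadget.

Variables (r s : R) (m : nat).

Let G := gadget r s m.

Hypotheses (r_pos : 0 < r) (r_lt_s : r < s) (s_lt_1 : s < 1) (m_ge_2 : (2 <= m)%nat).

Lemma verts_gadget : verts G = [0%nat; 1%nat] ++ seq 2 m ++ seq (2 + m) m.
Proof.
  unfold verts, G, gadget; cbn [nv].
  replace (2 * m + 2)%nat with (2 + (m + m))%nat by lia.
  now rewrite !seq_app.
Qed.

Lemma kind_eq_Hub (v : nat) : kind m v = Hub -> v = 0%nat.
Proof.
  unfold kind. destruct (Nat.eqb_spec v 0), (Nat.eqb_spec v 1), (v <? m + 2);
    easy.
Qed.

Lemma kind_eq_Low (v : nat) : kind m v = Low -> v = 1%nat.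
Proof.
  unfold kind. destruct (Nat.eqb_spec v 0), (Nat.eqb_spec v 1), (v <? m + 2);
    easy.
Qed.

Lemma kind_of_middle (u : nat) : In u (seq 2 m) -> kind m u = Mid.
Proof.
  rewrite in_seq. intros Hu. unfold kind.
  destruct (Nat.eqb_spec u 0), (Nat.eqb_spec u 1), (Nat.ltb_spec u (m + 2));
    first [reflexivity | exfalso; lia].
Qed.

Lemma kind_of_padding (u : nat) : In u (seq (2 + m) m) -> kind m u = Pad.
Proof.
  rewrite in_seq. intros Hu. unfold kind.
  destruct (Nat.eqb_spec u 0), (Nat.eqb_spec u 1), (Nat.ltb_spec u (m + 2));
    first [reflexivity | exfalso; lia].
Qed.

Lemma kind_inhabited (k : vkind) : exists w, In w (verts G) /\ kind m w = k.
Proof.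
  rewrite verts_gadget.
  destruct k; [exists 0%nat | exists 1%nat | exists 2%nat | exists (2 + m)%nat];
    (split; [|try reflexivity]).
  - now left.
  - right; now left.
  - apply in_or_app; right; apply in_or_app; left; apply in_seq; lia.
  - apply kind_of_middle, in_seq; lia.
  - apply in_or_app; right; apply in_or_app; right; apply in_seq; lia.
  - apply kind_of_padding, in_seq; lia.
Qed.

Lemma independent_same_kind (l : list nat) (k : vkind) :
  (forall u, In u l -> kind m u = k) -> independent G l.
Proof.
  intros Hk u w Hu Hw. cbn [G gadget adj]. rewrite (Hk u), (Hk w) by assumption.
  apply kind_adj_refl.
Qed.

Lemma deg_gadget (v : nat) : deg_in G (verts G) v = kind_deg m (kind m v).
Proof.
  unfold deg_in. rewrite verts_gadget, !filter_app, !length_app.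
  cbn [G gadget adj].
  rewrite (length_filter_const _ (kind_adj (kind m v) Mid) (seq 2 m)),
    (length_filter_const _ (kind_adj (kind m v) Pad) (seq (2 + m) m)), !length_seq.
  - unfold kind_deg. destruct (kind m v); reflexivity.
  - intros u Hu. now rewrite (kind_of_padding u Hu).
  - intros u Hu. now rewrite (kind_of_middle u Hu).
Qed.

Lemma INR_ge_2 : 2 <= INR m.
Proof. pose proof (le_INR 2 m m_ge_2) as Hm. simpl in Hm. lra. Qed.

Lemma hub_ratio_gt_1 : 1 < hub_ratio m.
Proof.
  pose proof INR_ge_2. unfold hub_ratio.
  apply (Rmult_lt_reg_r (INR m + 3)); [lra|].
  unfold Rdiv. rewrite Rmult_assoc, Rinv_l; lra.
Qed.

Lemma hub_ratio_lt_2 : hub_ratio m < 2.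
Proof.
  pose proof INR_ge_2. unfold hub_ratio.
  apply (Rmult_lt_reg_r (INR m + 3)); [lra|].
  unfold Rdiv. rewrite Rmult_assoc, Rinv_l; lra.
Qed.

Lemma low_ratio_gt_1 : 1 < low_ratio m.
Proof.
  pose proof INR_ge_2. unfold low_ratio.
  apply (Rmult_lt_reg_r (INR m + 2)); [lra|].
  unfold Rdiv. rewrite Rmult_assoc, Rinv_l; lra.
Qed.

Lemma score_gadget (ad : bool) (rho : R) (v : nat) :
  score ad rho G (verts G) v = kind_score r s m rho (kind m v).
Proof.
  pose proof hub_ratio_gt_1. pose proof low_ratio_gt_1. pose proof INR_ge_2.
  rewrite score_initial, deg_gadget. cbn [G gadget wt].
  destruct (kind m v); unfold kind_score, kind_wt, mid_score, kind_deg;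
    cbn [kind_adj]; rewrite ?plus_INR; simpl INR.
  - replace (1 + (0 + 1 + INR m + INR m)) with ((INR m + 3) * Rpower (hub_ratio m) 1)
      by (rewrite Rpower_1 by lra; unfold hub_ratio; field; lra).
    rewrite Rpower_div_scaled_base by lra. do 2 f_equal. ring.
  - replace (1 + (1 + 0 + INR m + 0)) with ((INR m + 3) * Rpower (low_ratio m) (Ropp 1))
      by (rewrite Rpower_Ropp, Rpower_1 by lra; unfold low_ratio; field; lra).
    rewrite Rpower_div_scaled_base by lra. do 2 f_equal. ring.
  - do 2 f_equal. ring.
  - unfold Rdiv. ring.
Qed.

Lemma mid_score_pos (rho : R) : 0 < mid_score m rho.
Proof.
  pose proof INR_ge_2. unfold mid_score, Rdiv.
  apply Rmult_lt_0_compat; apply Rinv_0_lt_compat; [lra | apply Rpower_pos].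
Qed.

Lemma hub_score_dominates (rho : R) : rho < r ->
  forall k, k <> Hub -> kind_score r s m rho k < kind_score r s m rho Hub.
Proof.
  intros Hr k Hk. pose proof (mid_score_pos rho).
  pose proof (Rpower_gt_1 _ (r - rho) hub_ratio_gt_1 ltac:(lra)).
  pose proof (Rpower_lt_1 _ (rho - s) low_ratio_gt_1 ltac:(lra)).
  pose proof (Rpower_pos (low_ratio m) (rho - s)).
  destruct k; [easy | ..]; cbn [kind_score]; nra.
Qed.

Lemma low_score_dominates (rho : R) : s < rho ->
  forall k, k <> Low -> kind_score r s m rho k < kind_score r s m rho Low.
Proof.
  intros Hs k Hk. pose proof (mid_score_pos rho).
  pose proof (Rpower_lt_1 _ (r - rho) hub_ratio_gt_1 ltac:(lra)).
  pose proof (Rpower_gt_1 _ (rho - s) low_ratio_gt_1 ltac:(lra)).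
  pose proof (Rpower_pos (hub_ratio m) (r - rho)).
  destruct k; [| easy | ..]; cbn [kind_score]; nra.
Qed.

Lemma mid_score_dominates (rho : R) : r < rho < s ->
  forall k, k <> Mid -> kind_score r s m rho k < kind_score r s m rho Mid.
Proof.
  intros Hrho k Hk. pose proof (mid_score_pos rho).
  pose proof (Rpower_lt_1 _ (r - rho) hub_ratio_gt_1 ltac:(lra)).
  pose proof (Rpower_lt_1 _ (rho - s) low_ratio_gt_1 ltac:(lra)).
  destruct k; [.. | easy |]; cbn [kind_score]; nra.
Qed.

Lemma first_pick_exists (ad : bool) (rho : R) :
  exists v, best (score ad rho G (verts G)) (verts G) = Some v.
Proof.
  destruct (best _ (verts G)) as [v|] eqn:Hbest; [now exists v|].
  apply best_None_nil in Hbest. now rewrite verts_gadget in Hbest.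
Qed.

Lemma first_pick_kind (ad : bool) (rho : R) (k : vkind) (v : nat) :
  (forall k', k' <> k -> kind_score r s m rho k' < kind_score r s m rho k) ->
  best (score ad rho G (verts G)) (verts G) = Some v -> kind m v = k.
Proof.
  intros Hdom Hbest. destruct (best_spec _ _ _ Hbest) as [_ Hmax].
  destruct (kind_inhabited k) as [w [Hw Hwk]].
  specialize (Hmax w Hw). rewrite !score_gadget, Hwk in Hmax.
  pose proof (Hdom (kind m v)) as Hv.
  destruct (kind m v), k; try reflexivity; specialize (Hv ltac:(discriminate)); lra.
Qed.

Lemma drop_adjacent (v : nat) (l : list nat) :
  (forall u, In u l -> u <> v -> kind_adj (kind m v) (kind m u) = true) ->
  drop_closed_nbhd G v l = [].
Proof.
  intros Hadj. unfold drop_closed_nbhd.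
  rewrite (filter_ext_in _ (fun _ => false)), filter_false; [reflexivity|].
  intros u Hu. cbn [G gadget adj].
  destruct (Nat.eqb_spec u v) as [|Hne]; [reflexivity|].
  now rewrite Hadj, andb_false_r.
Qed.

Lemma kind_eq_Mid (v : nat) : kind m v = Mid -> In v (seq 2 m).
Proof.
  unfold kind. rewrite in_seq.
  destruct (Nat.eqb_spec v 0), (Nat.eqb_spec v 1), (Nat.ltb_spec v (m + 2));
    first [discriminate | lia].
Qed.

Lemma cost_gadget_below (ad : bool) (rho : R) : rho < r ->
  cost ad rho G = kind_wt r s m Hub.
Proof.
  intros Hr. destruct (first_pick_exists ad rho) as [v Hbest].
  pose proof (first_pick_kind ad rho Hub v (hub_score_dominates rho Hr) Hbest) as Hv.
  assert (Hdrop : drop_closed_nbhd G v (verts G) = []).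
  { apply drop_adjacent. intros u _ Hne. rewrite Hv.
    destruct (kind m u) eqn:Hu; try reflexivity.
    exfalso. apply Hne. now rewrite (kind_eq_Hub u Hu), (kind_eq_Hub v Hv). }
  rewrite (cost_first_pick _ _ _ v Hbest), Hdrop.
  - cbn [G gadget wt weight fold_right]. rewrite Hv. ring.
  - rewrite Hdrop. intros u w [].
Qed.

Lemma cost_gadget_above (ad : bool) (rho : R) : s < rho ->
  cost ad rho G = kind_wt r s m Low.
Proof.
  intros Hs. destruct (first_pick_exists ad rho) as [v Hbest].
  pose proof (first_pick_kind ad rho Low v (low_score_dominates rho Hs) Hbest) as Hv.
  assert (Hpad : forall u, In u (drop_closed_nbhd G v (verts G)) -> kind m u = Pad).
  { intros u Hu. apply filter_In in Hu as [_ Hu]. cbn [G gadget adj] in Hu.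
    rewrite Hv in Hu. apply andb_prop in Hu as [Hne Hadj].
    apply negb_true_iff, Nat.eqb_neq in Hne.
    destruct (kind m u) eqn:Hk; try discriminate Hadj; [|reflexivity].
    exfalso. apply Hne. now rewrite (kind_eq_Low u Hk), (kind_eq_Low v Hv). }
  rewrite (cost_first_pick _ _ _ v Hbest), (weight_const _ _ 0).
  - cbn [G gadget wt]. rewrite Hv. ring.
  - intros u Hu. cbn [G gadget wt]. now rewrite Hpad.
  - exact (independent_same_kind _ Pad Hpad).
Qed.

Lemma cost_gadget_between (ad : bool) (rho : R) : r < rho < s ->
  cost ad rho G = 1.
Proof.
  intros Hrho. destruct (first_pick_exists ad rho) as [v Hbest].
  pose proof (first_pick_kind ad rho Mid v (mid_score_dominates rho Hrho) Hbest) as Hv.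
  assert (Hdrop : drop_closed_nbhd G v (verts G) = filter (fun u => negb (u =? v)) (seq 2 m)).
  { rewrite verts_gadget. unfold drop_closed_nbhd. rewrite !filter_app.
    fold (drop_closed_nbhd G v [0%nat; 1%nat]) (drop_closed_nbhd G v (seq (2 + m) m)).
    rewrite !drop_adjacent, app_nil_r.
    - apply filter_ext_in. intros u Hu. cbn [G gadget adj].
      now rewrite Hv, (kind_of_middle u Hu), andb_true_r.
    - intros u Hu _. now rewrite Hv, (kind_of_padding u Hu).
    - intros u [<-|[<-|[]]] _; now rewrite Hv. }
  assert (Hmid : forall u, In u (seq 2 m) -> wt G u = / INR m).
  { intros u Hu. cbn [G gadget wt]. now rewrite (kind_of_middle u Hu). }
  rewrite (cost_first_pick _ _ _ v Hbest), Hdrop.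
  - rewrite <- weight_remove by (apply seq_NoDup || now apply kind_eq_Mid).
    rewrite (weight_const _ _ _ Hmid), length_seq.
    apply Rinv_r. pose proof INR_ge_2. lra.
  - rewrite Hdrop. apply (independent_same_kind _ Mid).
    intros u Hu. apply filter_In in Hu as [Hu _]. now apply kind_of_middle.
Qed.

Lemma kind_wt_bounds (k : vkind) : 0 <= kind_wt r s m k <= 2 / INR m.
Proof.
  pose proof hub_ratio_gt_1. pose proof hub_ratio_lt_2.
  pose proof low_ratio_gt_1. pose proof INR_ge_2.
  assert (Hdiv : forall a, 0 <= a <= 2 -> 0 <= a / INR m <= 2 / INR m).
  { intros a Ha. unfold Rdiv. pose proof (Rinv_0_lt_compat (INR m) ltac:(lra)).
    split; [apply Rmult_le_pos | apply Rmult_le_compat_r]; lra. }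
  destruct k; cbn [kind_wt].
  - apply Hdiv. pose proof (Rpower_pos (hub_ratio m) r).
    pose proof (Rle_Rpower (hub_ratio m) r 1 ltac:(lra) ltac:(lra)).
    rewrite Rpower_1 in * by lra. lra.
  - apply Hdiv. pose proof (Rpower_pos (low_ratio m) (- s)).
    pose proof (Rle_Rpower (low_ratio m) (- s) 0 ltac:(lra) ltac:(lra)).
    rewrite Rpower_O in * by lra. lra.
  - replace (/ INR m) with (1 / INR m) by (field; lra). apply Hdiv. lra.
  - destruct (Hdiv 1 ltac:(lra)) as [Hpos _]. unfold Rdiv in Hpos. lra.
Qed.

Lemma gadget_wf : wf_mwis G.
Proof.
  split; [|split]; cbn [G gadget adj wt].
  - intros u v. apply kind_adj_sym.
  - intros v. apply kind_adj_refl.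
  - intros v _. apply kind_wt_bounds.
Qed.

End Gadget.

Theorem mainTheorem11 :
  forall r s : R, 0 < r -> r < s -> s < 1 ->
  forall adaptive : bool,
  exists (N : nat) (X : nat -> mwis),
    (forall n : nat, (N <= n)%nat -> wf_mwis (X n) /\ (nv (X n) <= n)%nat) /\
    (forall n : nat, (N <= n)%nat ->
       forall rho : R, r < rho < s -> cost adaptive rho (X n) = 1) /\
    (forall rho : R, 0 <= rho <= 1 -> (rho < r \/ s < rho) ->
       Un_cv (fun n => cost adaptive rho (X n)) 0).
Proof.
  intros r s Hr Hrs Hs ad.
  set (size n := (n / 2 - 1)%nat).
  assert (Hsize : forall K n, (2 * K + 2 <= n)%nat ->
                    (K <= size n)%nat /\ (2 * size n + 2 <= n)%nat).
  { intros K n Hn. unfold size.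
    pose proof (Nat.div_mod_eq n 2). pose proof (Nat.mod_upper_bound n 2). lia. }
  exists 6%nat, (fun n => gadget r s (size n)). split; [|split].
  - intros n Hn. destruct (Hsize 2%nat n Hn) as [Hm Hnv].
    exact (conj (gadget_wf r s (size n) Hr Hrs Hs Hm) Hnv).
  - intros n Hn. destruct (Hsize 2%nat n Hn) as [Hm _].
    exact (cost_gadget_between r s (size n) Hr Hrs Hs Hm ad).
  - intros rho _ Hout. apply (Un_cv_0_le_div _ size 2 6).
    + intros K. exists (2 * K + 2)%nat. intros n Hn. apply (Hsize K n Hn).
    + intros n Hn. destruct (Hsize 2%nat n Hn) as [Hm _].
      destruct Hout as [Hrho|Hrho];
        [rewrite (cost_gadget_below r s (size n) Hr Hrs Hs Hm ad rho Hrho)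
        |rewrite (cost_gadget_above r s (size n) Hr Hrs Hs Hm ad rho Hrho)];
        apply kind_wt_bounds; assumption.
Qed.
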